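(* Let $(\mathfrak{g},[\cdot,\cdot]_{\mathfrak{g}})$ be a Leibniz algebra over a field $\mathbf{K}$, $(V;\rho^L,\rho^R)$ a representation, and $T:V\to\mathfrak{g}$ a relative Rota-Baxter operator. If $\mathcal{Z}^1(V,\mathfrak{g})=\partial_T(\mathrm{Nij}(T))$, then $T$ is rigid.
   Context: A Leibniz algebra is a vector space $\mathfrak{g}$ with bilinear $[\cdot,\cdot]_{\mathfrak{g}}$ satisfying $[x,[y,z]_{\mathfrak{g}}]_{\mathfrak{g}}=[[x,y]_{\mathfrak{g}},z]_{\mathfrak{g}}+[y,[x,z]_{\mathfrak{g}}]_{\mathfrak{g}}$. A representation $(V;\rho^L,\rho^R)$: linear $\rho^L,\rho^R:\mathfrak{g}\to\mathfrak{gl}(V)$ with $\rho^L([x,y]_{\mathfrak{g}})=[\rho^L(x),\rho^L(y)]$, $\rho^R([x,y]_{\mathfrak{g}})=[\rho^L(x),\rho^R(y)]$, $\rho^R(y)\rho^L(x)=-\rho^R(y)\rho^R(x)$. $L_xy=[x,y]_{\mathfrak{g}}$. A relative Rota-Baxter operator is a linear $T:V\to\mathfrak{g}$ with $[Tv_1,Tv_2]_{\mathfrak{g}}=T(\rho^L(Tv_1)v_2+\rho^R(Tv_2)v_1)$. $C^1(V,\mathfrak{g})=\mathrm{Hom}(V,\mathfrak{g})$; $\partial_T:\mathfrak{g}\to C^1$ is $(\partial_Tx)(v)=T\rho^L(x)v-[x,Tv]_{\mathfrak{g}}$, and $\partial_T:C^1\to\mathrm{Hom}(V\otimes V,\mathfrak{g})$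 is $(\partial_Tf)(u,v)=[Tu,f(v)]_{\mathfrak{g}}+[f(u),Tv]_{\mathfrak{g}}-T(\rho^L(f(u))v+\rho^R(f(v))u)-f(\rho^L(Tu)v+\rho^R(Tv)u)$; $\mathcal{Z}^1(V,\mathfrak{g})$ is the kernel of the latter. An element $x\in\mathfrak{g}$ is a Nijenhuis element associated to $T$ if for all $y,z\in\mathfrak{g}$, $u\in V$: $[[x,y]_{\mathfrak{g}},[x,z]_{\mathfrak{g}}]_{\mathfrak{g}}=0$, $\rho^L([x,y]_{\mathfrak{g}})\rho^L(x)=0$, $\rho^R([x,y]_{\mathfrak{g}})\rho^L(x)=0$, $[x,T\rho^L(x)u-[x,Tu]_{\mathfrak{g}}]_{\mathfrak{g}}=0$; $\mathrm{Nij}(T)$ is the set of these. Formal deformations: the bracket and $\rho^L,\rho^R$ extend $\mathbf{K}[[t]]$-bilinearly to $\mathfrak{g}[[t]]$, $V[[t]]$. A formal deformation of $T$ is $T_t=\sum_{i\ge0}\mathfrak{T}_it^i$, $\mathfrak{T}_i\in\mathrm{Hom}(V,\mathfrak{g})$, $\mathfrak{T}_0=T$, extended $\mathbf{K}[[t]]$-linearly, with $[T_t(u),T_t(v)]_{\mathfrak{g}}=T_t(\rho^L(T_t(u))v+\rho^R(T_t(v))u)$ for $u,v\in V$. Two formal deformations $\bar T_t,T_t$ of $T$ are equivalent if there exist $x\in\mathfrak{g}$, $\phi_i\in\mathfrak{gl}(\mathfrak{g})$, $\varphi_i\in\mathfrak{gl}(V)$ ($i\ge2$) such that $\phi_t=\mathrm{Id}_{\mathfrak{g}}+tL_x+\sum_{i\ge2}\phi_it^i$,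 $\varphi_t=\mathrm{Id}_V+t\rho^L(x)+\sum_{i\ge2}\varphi_it^i$ satisfy $[\phi_t(y),\phi_t(z)]_{\mathfrak{g}}=\phi_t[y,z]_{\mathfrak{g}}$, $\varphi_t\rho^L(y)u=\rho^L(\phi_t(y))\varphi_t(u)$, $\varphi_t\rho^R(y)u=\rho^R(\phi_t(y))\varphi_t(u)$, and $T_t\circ\varphi_t=\phi_t\circ\bar T_t$. A formal deformation $T_t$ is trivial if it is equivalent to $T$ (the constant deformation, taken as $\bar T_t=T$). $T$ is rigid if every formal deformation of $T$ is trivial. *)

From HB Require Import structures.
From mathcomp Require Import all_boot all_algebra.
Set Implicit Arguments. Unset Strict Implicit. Unset Printing Implicit Defensive.
Import GRing.Theory.
Local Open Scope ring_scope.

Section Leib.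
Variables (K : fieldType) (g V : lmodType K).
Variable br : g -> g -> g.
Variables rhoL rhoR : g -> V -> V.

Definition leibniz_algebra : Prop :=
  (forall x, linear (br x)) /\ (forall z, linear (fun x => br x z)) /\
  (forall x y z, br x (br y z) = br (br x y) z + br y (br x z)).

Definition leibniz_rep : Prop :=
  (forall x, linear (rhoL x)) /\ (forall x, linear (rhoR x)) /\
  (forall v, linear (fun x => rhoL x v)) /\ (forall v, linear (fun x => rhoR x v)) /\
  (forall x y v, rhoL (br x y) v = rhoL x (rhoL y v) - rhoL y (rhoL x v)) /\
  (forall x y v, rhoR (br x y) v = rhoL x (rhoR y v) - rhoR y (rhoL x v)) /\
  (forall x y v, rhoR y (rhoL x v) = - rhoR y (rhoR x v)).

Definition relative_RB (T : V -> g) : Prop :=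
  linear T /\
  forall v1 v2, br (T v1) (T v2) = T (rhoL (T v1) v2 + rhoR (T v2) v1).

Definition dT0 (T : V -> g) (x : g) : V -> g :=
  fun v => T (rhoL x v) - br x (T v).

Definition dT1 (T : V -> g) (f : V -> g) : V -> V -> g :=
  fun u v => br (T u) (f v) + br (f u) (T v)
             - T (rhoL (f u) v + rhoR (f v) u)
             - f (rhoL (T u) v + rhoR (T v) u).

Definition Z1 (T : V -> g) (f : V -> g) : Prop :=
  linear f /\ forall u v, dT1 T f u v = 0.

Definition Nij (T : V -> g) (x : g) : Prop :=
  (forall y z, br (br x y) (br x z) = 0) /\
  (forall y v, rhoL (br x y) (rhoL x v) = 0) /\
  (forall y v, rhoR (br x y) (rhoL x v) = 0) /\
  (forall u, br x (T (rhoL x u) - br x (T u)) = 0).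

(* Formal deformation T_t = sum_i Tt i t^i, the identity compared
   coefficientwise in t (u, v in V). *)
Definition formal_deformation (T : V -> g) (Tt : nat -> V -> g) : Prop :=
  (forall i, linear (Tt i)) /\ Tt 0%N = T /\
  forall (n : nat) (u v : V),
    \sum_(i < n.+1) br (Tt i u) (Tt (n - i)%N v) =
    \sum_(i < n.+1) Tt i (rhoL (Tt (n - i)%N u) v + rhoR (Tt (n - i)%N v) u).

(* Tt is equivalent to Tbt: phi_t = sum phi i t^i, varphi_t = sum varphi i t^i *)
Definition deformation_equiv (Tbt Tt : nat -> V -> g) : Prop :=
  exists (x : g) (phi : nat -> g -> g) (vphi : nat -> V -> V),
    (forall i, linear (phi i)) /\ (forall i, linear (vphi i)) /\
    phi 0%N = id /\ phi 1%N = br x /\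
    vphi 0%N = id /\ vphi 1%N = rhoL x /\
    (forall n y z, \sum_(i < n.+1) br (phi i y) (phi (n - i)%N z) = phi n (br y z)) /\
    (forall n y u, vphi n (rhoL y u) =
                   \sum_(i < n.+1) rhoL (phi i y) (vphi (n - i)%N u)) /\
    (forall n y u, vphi n (rhoR y u) =
                   \sum_(i < n.+1) rhoR (phi i y) (vphi (n - i)%N u)) /\
    (forall n u, \sum_(i < n.+1) Tt i (vphi (n - i)%N u) =
                 \sum_(i < n.+1) phi i (Tbt (n - i)%N u)).

Definition const_deformation (T : V -> g) : nat -> V -> g :=
  fun i => if i is 0%N then T else (fun _ => 0).

Definition trivial_deformation (T : V -> g) (Tt : nat -> V -> g) : Prop :=
  deformation_equiv (const_deformation T) Tt.

Definition rigid (T : V -> g) : Prop :=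
  forall Tt, formal_deformation T Tt -> trivial_deformation T Tt.

End Leib.

From mathcomp Require Import all_boot all_algebra zify.
From Stdlib Require Import ClassicalEpsilon FunctionalExtensionality.
Set Implicit Arguments. Unset Strict Implicit. Unset Printing Implicit Defensive.
Import GRing.Theory.
Local Open Scope ring_scope.

(* Gauge the deformation away one order at a time.  Suppose formal
   automorphisms (phi, psi) transport T_t to a deformation S_t with
   S_0 = T and S_i = 0 for 0 < i <= k.  The coefficient of t^(k+1) in the
   Rota-Baxter identity for S_t says that S_(k+1) is a 1-cocycle, hence
   S_(k+1) = - d_T x for a Nijenhuis element x.  The Nijenhuis conditions
   make 1 + t^(k+1) L_x an automorphism of g[[t]] compatible with
   1 + t^(k+1) rhoL(x), and conjugating S_t by this pair kills S_(k+1)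
   while leaving the lower orders untouched.  The composed automorphisms
   therefore stabilise coefficientwise, and their limit trivialises T_t. *)

(* Formal power series are sequences [a : nat -> C] of coefficients.
   [conv h n] is the coefficient of t^n in a product whose two factors
   contribute [h i j] from their coefficients of degrees i and j;
   [shift k a] is t^k * a. *)
Section Series.
Variable C : zmodType.
Implicit Types (h : nat -> nat -> C) (a b c : nat -> C).

Definition conv h n : C := \sum_(i < n.+1) h i (n - i)%N.
Definition shift k a n : C := if (k <= n)%N then a (n - k)%N else 0.

Lemma eq_conv_le h1 h2 n :
  (forall i j, (i <= n)%N -> (j <= n)%N -> h1 i j = h2 i j) -> conv h1 n = conv h2 n.
Proof.
move=> E; apply: eq_bigr => i _; apply: E; [by rewrite -ltnS | exact: leq_subr].
Qed.

Lemma eq_conv h1 h2 n : (forall i j, h1 i j = h2 i j) -> conv h1 n = conv h2 n.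
Proof. by move=> E; apply: eq_conv_le => i j _ _. Qed.

Lemma convD h1 h2 n : conv (fun i j => h1 i j + h2 i j) n = conv h1 n + conv h2 n.
Proof. exact: big_split. Qed.

Lemma conv_eq0 h n : (forall i j, h i j = 0) -> conv h n = 0.
Proof. by move=> E; apply: big1 => i _. Qed.

Lemma convC h n : conv h n = conv (fun i j => h j i) n.
Proof.
rewrite /conv (reindex_inj rev_ord_inj) /=; apply: eq_bigr => i _.
have := ltn_ord i; rewrite subSS => ?; congr (h _ _); lia.
Qed.

Lemma conv_deg0l h n : (forall i j, (0 < i)%N -> h i j = 0) -> conv h n = h 0%N n.
Proof.
by move=> E; rewrite /conv big_ord_recl big1 ?addr0 ?subn0 // => i _; rewrite E.
Qed.

Lemma conv_deg0r h n : (forall i j, (0 < j)%N -> h i j = 0) -> conv h n = h n 0%N.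
Proof. by move=> E; rewrite convC conv_deg0l // => i j /E. Qed.

Lemma conv_ends h n : (0 < n)%N ->
  (forall i, (0 < i < n)%N -> h i (n - i)%N = 0) -> conv h n = h 0%N n + h n 0%N.
Proof.
case: n => // n _ E; rewrite /conv big_ord_recl big_ord_recr /=.
by rewrite big1 ?add0r ?subn0 ?subnn // => i _; rewrite E //= /bump add1n ltnS.
Qed.

Lemma eq_shift k a b n : (forall l, a l = b l) -> shift k a n = shift k b n.
Proof. by move=> E; rewrite /shift E. Qed.

Lemma shift_eq0 k a n : (forall l, a l = 0) -> shift k a n = 0.
Proof. by move=> E; rewrite /shift E; case: leqP. Qed.

Lemma shiftD k a b n : shift k (fun l => a l + b l) n = shift k a n + shift k b n.
Proof. by rewrite /shift; case: leqP; rewrite ?addr0. Qed.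

Lemma conv_shiftl k h n :
  conv (fun i j => if (k <= i)%N then h (i - k)%N j else 0) n = shift k (conv h) n.
Proof.
rewrite /conv /shift; case: leqP => [kn|nk]; last first.
  by rewrite big1 // => i _; case: leqP => // ki; have := ltn_ord i; lia.
rewrite -(big_mkord xpredT (fun i => if (k <= i)%N then h (i - k)%N (n - i)%N else 0)).
rewrite (@big_cat_nat _ _ _ k) //=; last by lia.
rewrite big_nat_cond big1 ?add0r; last first.
  by move=> i /andP[/andP[_ ik] _]; rewrite leqNgt ik.
rewrite -{1}(add0n k) big_addn -(big_mkord xpredT (fun i => h i (n - k - i)%N)).
have -> : (n.+1 - k = (n - k).+1)%N by lia.
by apply: eq_bigr => i _; rewrite leq_addl; congr (h _ _); lia.
Qed.

Lemma conv_shiftr k h n :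
  conv (fun i j => if (k <= j)%N then h i (j - k)%N else 0) n = shift k (conv h) n.
Proof.
rewrite convC (conv_shiftl k (fun i j => h j i)).
by apply: eq_shift => l; rewrite convC.
Qed.

Lemma shift_inj k (L : C -> C) a b : (0 < k)%N ->
  (forall n, a n + shift k (fun l => L (a l)) n = b n + shift k (fun l => L (b l)) n) ->
  forall n, a n = b n.
Proof.
move=> k0 E; elim/ltn_ind => n IH; have := E n; rewrite /shift; case: leqP => kn.
  by rewrite (IH (n - k)%N); [move/addIr | lia].
by rewrite !addr0.
Qed.

(* Solves [a + t^k L(a) = c] order by order; as [k > 0], the fuel [n.+1]
   suffices at order [n]. *)
Fixpoint solve_fuel k (L : C -> C) c fuel n : C :=
  if fuel is fuel'.+1 then c n - shift k (fun l => L (solve_fuel k L c fuel' l)) n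
  else 0.

Definition solve_shift k L c n := solve_fuel k L c n.+1 n.

Lemma solve_fuel_enough k L c : (0 < k)%N -> forall f f' n, (n < f)%N -> (n < f')%N ->
  solve_fuel k L c f n = solve_fuel k L c f' n.
Proof.
move=> k0; elim=> [|f IH] [|f'] n //= nf nf'; rewrite /shift; case: leqP => // kn.
by rewrite (IH f') //; lia.
Qed.

Lemma solve_shiftP k L c : (0 < k)%N -> forall n,
  solve_shift k L c n + shift k (fun l => L (solve_shift k L c l)) n = c n.
Proof.
move=> k0 n; rewrite /solve_shift /= /shift; case: leqP => kn; last by rewrite subr0 addr0.
by rewrite (@solve_fuel_enough k L c k0 n (n - k).+1 (n - k)) ?subrK //; lia.
Qed.

End Series.

Section LinearMaps.
Variables (K : fieldType) (U W X : lmodType K).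
Implicit Types (f h : U -> W).

Lemma linD f : linear f -> forall a b, f (a + b) = f a + f b.
Proof. by move=> fL a b; have := fL 1 a b; rewrite !scale1r. Qed.

Lemma lin0 f : linear f -> f 0 = 0.
Proof. by move=> fL; have := fL (-1) 0 0; rewrite scaler0 addr0 scaleN1r addNr. Qed.

Lemma linN f : linear f -> forall a, f (- a) = - f a.
Proof. by move=> fL a; have := fL (-1) a 0; rewrite (lin0 fL) !addr0 !scaleN1r. Qed.

Lemma lin_conv f c n : linear f -> f (conv c n) = conv (fun i j => f (c i j)) n.
Proof. by move=> fL; rewrite /conv (big_morph f (linD fL) (lin0 fL)). Qed.

Lemma linear_eq f h : (forall u, f u = h u) -> linear h -> linear f.
Proof. by move=> E hL a u v; rewrite !E hL. Qed.

Lemma linear_add f h : linear f -> linear h -> linear (fun u => f u + h u).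
Proof. by move=> fL hL a u v; rewrite fL hL scalerDr addrACA. Qed.

Lemma linear_sub f h : linear f -> linear h -> linear (fun u => f u - h u).
Proof. by move=> fL hL a u v; rewrite fL hL scalerBr opprD addrACA. Qed.

Lemma linear_zero : linear (fun _ : U => (0 : W)).
Proof. by move=> a u v; rewrite scaler0 addr0. Qed.

Lemma linear_comp (f : W -> X) h : linear f -> linear h -> linear (fun u => f (h u)).
Proof. by move=> fL hL a u v; rewrite hL fL. Qed.

Lemma linear_shift k (F : nat -> U -> W) n : (forall l, linear (F l)) ->
  linear (fun u => shift k (fun l => F l u) n).
Proof. by move=> FL; rewrite /shift; case: leqP => _; [exact: FL | exact: linear_zero]. Qed.

End LinearMaps.

Definition id_series (C : zmodType) (n : nat) (y : C) : C := if n is 0%N then y else 0.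

Lemma linear_id_series (K : fieldType) (U : lmodType K) n : linear (@id_series U n).
Proof. by case: n => [|n] a u v /=; rewrite ?scaler0 ?addr0. Qed.

Section BilinearConv.
Variables A B C : zmodType.

Lemma conv_shift_bilinear (f : A -> B -> C) m a1 a2 b1 b2 n :
  (forall a a' b, f (a + a') b = f a b + f a' b) ->
  (forall a b b', f a (b + b') = f a b + f a b') ->
  (forall b, f 0 b = 0) -> (forall a, f a 0 = 0) ->
  conv (fun i j => f (a1 i + shift m a2 i) (b1 j + shift m b2 j)) n =
  conv (fun i j => f (a1 i) (b1 j)) n
  + shift m (conv (fun i j => f (a2 i) (b1 j) + f (a1 i) (b2 j))) n
  + shift m (shift m (conv (fun i j => f (a2 i) (b2 j)))) n.
Proof.
move=> fDl fDr f0l f0r.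
have -> : shift m (conv (fun i j => f (a2 i) (b1 j) + f (a1 i) (b2 j))) n =
  conv (fun i j => (if (m <= i)%N then f (a2 (i - m)%N) (b1 j) else 0)
                 + (if (m <= j)%N then f (a1 i) (b2 (j - m)%N) else 0)) n.
  rewrite convD (conv_shiftl m (fun i j => f (a2 i) (b1 j)))
     (conv_shiftr m (fun i j => f (a1 i) (b2 j))) -shiftD.
  by apply: eq_shift => l; rewrite convD.
have -> : shift m (shift m (conv (fun i j => f (a2 i) (b2 j)))) n =
  conv (fun i j => if (m <= i)%N then
                     (if (m <= j)%N then f (a2 (i - m)%N) (b2 (j - m)%N) else 0)
                   else 0) n.
  rewrite (conv_shiftl m (fun i j => if (m <= j)%N then f (a2 i) (b2 (j - m)%N) else 0)).
  by apply: eq_shift => l; rewrite (conv_shiftr m (fun i j => f (a2 i) (b2 j))).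
rewrite -!convD; apply: eq_conv => i j; rewrite /shift.
case: leqP => _; case: leqP => _; rewrite ?fDl ?fDr ?f0l ?f0r ?addr0 ?add0r ?addrA //.
by congr (_ + _); rewrite -!addrA; congr (_ + _); exact: addrC.
Qed.

Lemma conv_shift_additive (F : nat -> B -> C) m b1 b2 n :
  (forall i b b', F i (b + b') = F i b + F i b') -> (forall i, F i 0 = 0) ->
  conv (fun i j => F i (b1 j + shift m b2 j)) n =
  conv (fun i j => F i (b1 j)) n + shift m (conv (fun i j => F i (b2 j))) n.
Proof.
move=> FD F0; rewrite -(conv_shiftr m (fun i j => F i (b2 j))) -convD.
by apply: eq_conv => i j; rewrite FD /shift; case: leqP; rewrite ?F0.
Qed.

End BilinearConv.

Section Rigidity.
Variables (K : fieldType) (g V : lmodType K).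
Variable br : g -> g -> g.
Variables rhoL rhoR : g -> V -> V.
Variable T : V -> g.
Hypothesis HL : leibniz_algebra br.
Hypothesis HR : leibniz_rep br rhoL rhoR.

Let lin_br x : linear (br x). Proof. by case: HL. Qed.
Let lin_brl z : linear (fun x => br x z). Proof. by case: HL => _ []. Qed.
Let lin_rhoL x : linear (rhoL x). Proof. by case: HR. Qed.
Let lin_rhoR x : linear (rhoR x). Proof. by case: HR => _ []. Qed.
Let lin_rhoLl v : linear (fun x => rhoL x v). Proof. by case: HR => _ [_ []]. Qed.
Let lin_rhoRl v : linear (fun x => rhoR x v). Proof. by case: HR => _ [_ [_ []]]. Qed.

Lemma leibniz x y z : br x (br y z) = br (br x y) z + br y (br x z).
Proof. by case: HL => _ []. Qed.

Lemma rhoL_rhoL x y v : rhoL x (rhoL y v) = rhoL (br x y) v + rhoL y (rhoL x v).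
Proof. by case: HR => _ [_ [_ [_ [-> _]]]]; rewrite subrK. Qed.

Lemma rhoL_rhoR x y v : rhoL x (rhoR y v) = rhoR (br x y) v + rhoR y (rhoL x v).
Proof. by case: HR => _ [_ [_ [_ [_ [-> _]]]]]; rewrite subrK. Qed.

Let brDr x a b : br x (a + b) = br x a + br x b. Proof. exact: (linD (lin_br x)). Qed.
Let brDl a b z : br (a + b) z = br a z + br b z. Proof. exact: (linD (lin_brl z)). Qed.
Let br0r x : br x 0 = 0. Proof. exact: (lin0 (lin_br x)). Qed.
Let br0l z : br 0 z = 0. Proof. exact: (lin0 (lin_brl z)). Qed.
Let brNr x a : br x (- a) = - br x a. Proof. exact: (linN (lin_br x)). Qed.
Let brNl a z : br (- a) z = - br a z. Proof. exact: (linN (lin_brl z)). Qed.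
Let rhoLDr x a b : rhoL x (a + b) = rhoL x a + rhoL x b. Proof. exact: (linD (lin_rhoL x)). Qed.
Let rhoLDl a b z : rhoL (a + b) z = rhoL a z + rhoL b z. Proof. exact: (linD (lin_rhoLl z)). Qed.
Let rhoL0r x : rhoL x 0 = 0. Proof. exact: (lin0 (lin_rhoL x)). Qed.
Let rhoL0l z : rhoL 0 z = 0. Proof. exact: (lin0 (lin_rhoLl z)). Qed.
Let rhoLNl a z : rhoL (- a) z = - rhoL a z. Proof. exact: (linN (lin_rhoLl z)). Qed.
Let rhoRDr x a b : rhoR x (a + b) = rhoR x a + rhoR x b. Proof. exact: (linD (lin_rhoR x)). Qed.
Let rhoRDl a b z : rhoR (a + b) z = rhoR a z + rhoR b z. Proof. exact: (linD (lin_rhoRl z)). Qed.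
Let rhoR0r x : rhoR x 0 = 0. Proof. exact: (lin0 (lin_rhoR x)). Qed.
Let rhoR0l z : rhoR 0 z = 0. Proof. exact: (lin0 (lin_rhoRl z)). Qed.
Let rhoRNl a z : rhoR (- a) z = - rhoR a z. Proof. exact: (linN (lin_rhoRl z)). Qed.

Definition vprod (S : nat -> V -> g) u v j := rhoL (S j u) v + rhoR (S j v) u.

Definition rb_series (S : nat -> V -> g) := forall u v n,
  conv (fun i j => br (S i u) (S j v)) n = conv (fun i j => S i (vprod S u v j)) n.

Definition hom_series (P : nat -> g -> g) := forall n y z,
  conv (fun i j => br (P i y) (P j z)) n = P n (br y z).

Definition compat_left (P : nat -> g -> g) (Q : nat -> V -> V) := forall n y u,
  Q n (rhoL y u) = conv (fun i j => rhoL (P i y) (Q j u)) n.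

Definition compat_right (P : nat -> g -> g) (Q : nat -> V -> V) := forall n y u,
  Q n (rhoR y u) = conv (fun i j => rhoR (P i y) (Q j u)) n.

Definition intertwines (F : nat -> V -> g) (Q : nat -> V -> V)
    (P : nat -> g -> g) (S : nat -> V -> g) := forall n u,
  conv (fun i j => F i (Q j u)) n = conv (fun i j => P i (S j u)) n.

(* Composition with [phi = 1 + t^m L_x] and [psi = 1 + t^m rhoL x]:
   [twist_g] is [P o phi], [twist_V] is [Q o psi] and [twist_def] is
   [phi^-1 o S o psi]. *)
Definition twist_g m x (P : nat -> g -> g) n y := P n y + shift m (fun j => P j (br x y)) n.
Definition twist_V m x (Q : nat -> V -> V) n u := Q n u + shift m (fun j => Q j (rhoL x u)) n.
Definition twist_def m x (S : nat -> V -> g) n u :=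
  solve_shift m (br x) (fun l => S l u + shift m (fun j => S j (rhoL x u)) l) n.

Section Twist.
Variables (m : nat) (x : g).
Hypothesis m_gt0 : (0 < m)%N.
Hypothesis Nx : Nij br rhoL rhoR T x.

Let nij_br y z : br (br x y) (br x z) = 0. Proof. by case: Nx. Qed.
Let nij_rhoL y v : rhoL (br x y) (rhoL x v) = 0. Proof. by case: Nx => _ []. Qed.
Let nij_rhoR y v : rhoR (br x y) (rhoL x v) = 0. Proof. by case: Nx => _ [_ []]. Qed.

Lemma twist_defE S n u :
  twist_def m x S n u + shift m (fun j => br x (twist_def m x S j u)) n
  = S n u + shift m (fun j => S j (rhoL x u)) n.
Proof. exact: solve_shiftP. Qed.

Lemma twist_def_lt S n u : (n < m)%N -> twist_def m x S n u = S n u.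
Proof.
by move=> nm; have := twist_defE S n u; rewrite /shift leqNgt nm !addr0.
Qed.

Lemma twist_def_m S u : (forall w, S 0%N w = T w) ->
  twist_def m x S m u = S m u + dT0 br rhoL T x u.
Proof.
move=> S0; have := twist_defE S m u; rewrite /shift leqnn subnn (twist_def_lt _ _ m_gt0) !S0.
by move/(canRL (addrK _)) => ->; rewrite /dT0 addrA.
Qed.

Lemma linear_twist_g P n : (forall n, linear (P n)) -> linear (twist_g m x P n).
Proof.
move=> PL; apply: linear_add => //.
by apply: (@linear_shift _ _ _ m (fun l u => P l (br x u))) => l; apply: linear_comp.
Qed.

Lemma linear_twist_V Q n : (forall n, linear (Q n)) -> linear (twist_V m x Q n).
Proof.
move=> QL; apply: linear_add => //.
by apply: (@linear_shift _ _ _ m (fun l u => Q l (rhoL x u))) => l; apply: linear_comp.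
Qed.

Lemma linear_twist_def S : (forall n, linear (S n)) -> forall n, linear (twist_def m x S n).
Proof.
move=> SL; elim/ltn_ind => n IH.
apply: (@linear_eq _ _ _ _ (fun u => (S n u + shift m (fun j => S j (rhoL x u)) n)
                                     - shift m (fun j => br x (twist_def m x S j u)) n)).
  by move=> u; rewrite -twist_defE addrK.
apply: linear_sub; first apply: linear_add => //.
  by apply: (@linear_shift _ _ _ m (fun l u => S l (rhoL x u))) => l; apply: linear_comp.
rewrite /shift; case: leqP => mn; last exact: linear_zero.
by apply: linear_comp => //; apply: IH; lia.
Qed.

Lemma hom_twist P : (forall n, linear (P n)) -> hom_series P -> hom_series (twist_g m x P).
Proof.
move=> PL HP n y z; rewrite /twist_g (conv_shift_bilinear _ _ _ _ _ _ brDl brDr br0l br0r) HP.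
have -> : shift m (shift m (conv (fun i j => br (P i (br x y)) (P j (br x z))))) n = 0.
  by apply: shift_eq0 => l; apply: shift_eq0 => l'; rewrite HP nij_br (lin0 (PL l')).
rewrite addr0; congr (_ + _); apply: eq_shift => l.
by rewrite convD !HP -(linD (PL l)) -leibniz.
Qed.

Lemma compat_left_twist P Q : (forall n, linear (Q n)) ->
  compat_left P Q -> compat_left (twist_g m x P) (twist_V m x Q).
Proof.
move=> QL HC n y u; rewrite /twist_g /twist_V.
rewrite (conv_shift_bilinear _ _ _ _ _ _ rhoLDl rhoLDr rhoL0l rhoL0r) -HC -addrA; congr (_ + _).
have -> : shift m (shift m (conv (fun i j => rhoL (P i (br x y)) (Q j (rhoL x u))))) n = 0.
  by apply: shift_eq0 => l; apply: shift_eq0 => l'; rewrite -HC nij_rhoL (lin0 (QL l')).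
rewrite addr0; apply: eq_shift => l.
by rewrite convD -!HC -(linD (QL l)) -rhoL_rhoL.
Qed.

Lemma compat_right_twist P Q : (forall n, linear (Q n)) ->
  compat_right P Q -> compat_right (twist_g m x P) (twist_V m x Q).
Proof.
move=> QL HC n y u; rewrite /twist_g /twist_V.
rewrite (conv_shift_bilinear _ _ _ _ _ _ rhoRDl rhoRDr rhoR0l rhoR0r) -HC -addrA; congr (_ + _).
have -> : shift m (shift m (conv (fun i j => rhoR (P i (br x y)) (Q j (rhoL x u))))) n = 0.
  by apply: shift_eq0 => l; apply: shift_eq0 => l'; rewrite -HC nij_rhoR (lin0 (QL l')).
rewrite addr0; apply: eq_shift => l.
by rewrite convD -!HC -(linD (QL l)) -rhoL_rhoR.
Qed.

Lemma intertwines_twist F P Q S : (forall n, linear (F n)) -> (forall n, linear (P n)) ->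
  intertwines F Q P S -> intertwines F (twist_V m x Q) (twist_g m x P) (twist_def m x S).
Proof.
move=> FL PL HI n u.
have FD i : forall a b, F i (a + b) = F i a + F i b by exact: linD.
have PD i : forall a b, P i (a + b) = P i a + P i b by exact: linD.
have F0 i : F i 0 = 0 by exact: lin0.
have P0 i : P i 0 = 0 by exact: lin0.
rewrite /twist_V (conv_shift_additive _ _ _ _ FD F0) HI.
rewrite (eq_shift m n (fun l => HI l (rhoL x u))) -(conv_shift_additive _ _ _ _ PD P0).
under eq_conv do rewrite -twist_defE.
rewrite (conv_shift_additive _ _ _ _ PD P0) /twist_g convD.
by rewrite -(conv_shiftl m (fun i j => P i (br x (twist_def m x S j u)))).
Qed.

Lemma conv_br_twist (a c : nat -> g) n :
  conv (fun i j => br (a i + shift m (fun l => br x (a l)) i)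
                      (c j + shift m (fun l => br x (c l)) j)) n
  = conv (fun i j => br (a i) (c j)) n
    + shift m (fun l => br x (conv (fun i j => br (a i) (c j)) l)) n.
Proof.
rewrite (conv_shift_bilinear _ _ _ _ _ _ brDl brDr br0l br0r).
have -> : shift m (shift m (conv (fun i j => br (br x (a i)) (br x (c j))))) n = 0.
  by apply: shift_eq0 => l; apply: shift_eq0 => l'; apply: conv_eq0 => i j; apply: nij_br.
rewrite addr0; congr (_ + _); apply: eq_shift => l.
by rewrite (lin_conv _ _ (lin_br x)); apply: eq_conv => i j; rewrite [RHS]leibniz.
Qed.

Lemma vprod_twist S u v j :
  vprod (twist_def m x S) u v j + shift m (fun l => rhoL x (vprod (twist_def m x S) u v l)) j
  = vprod S u v j + shift m (fun l => vprod S (rhoL x u) v l + vprod S u (rhoL x v) l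
                                     + shift m (vprod S (rhoL x u) (rhoL x v)) l) j.
Proof.
set S' := twist_def m x S.
have S'E w l : S' l w = S l w + shift m (fun i => S i (rhoL x w)) l
                        - shift m (fun i => br x (S' i w)) l by rewrite -twist_defE addrK.
have rhoL_S' w l z : rhoL (S' l w) (rhoL x z)
    = rhoL (S l w) (rhoL x z) + shift m (fun i => rhoL (S i (rhoL x w)) (rhoL x z)) l.
  rewrite S'E rhoLDl rhoLNl rhoLDl /shift; case: leqP => _; last by rewrite rhoL0l oppr0 !addr0.
  by rewrite nij_rhoL oppr0 addr0.
have rhoR_S' w l z : rhoR (S' l w) (rhoL x z)
    = rhoR (S l w) (rhoL x z) + shift m (fun i => rhoR (S i (rhoL x w)) (rhoL x z)) l.
  rewrite S'E rhoRDl rhoRNl rhoRDl /shift; case: leqP => _; last by rewrite rhoR0l oppr0 !addr0.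
  by rewrite nij_rhoR oppr0 addr0.
rewrite {1 2}/shift; case: (leqP m j) => mj; last first.
  by rewrite /vprod /S' !twist_def_lt // !addr0.
have S'j w : S' j w + br x (S' (j - m)%N w) = S j w + S (j - m)%N (rhoL x w).
  by have := twist_defE S j w; rewrite /shift mj.
have regroup6 (p q r s t w : V) :
  (p + q) + ((r + s) + (t + w)) = (p + r) + (q + t) + (s + w).
  by rewrite (addrACA r s t w) (addrA (p + q)) (addrACA p q r t).
have regroup8 (a b c d e f a' b' : V) :
  (a + b) + (c + d) + ((e + a') + (f + b')) = a + c + ((b + f) + (e + d) + (a' + b')).
  rewrite (addrACA a b c d) (addrACA e a' f b') -[LHS]addrA; congr (_ + _).
  by rewrite [LHS]addrA (addrACA b d e f) (addrACA b f e d) [d + f]addrC.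
rewrite /vprod rhoLDr rhoL_rhoL rhoL_rhoR regroup6 -rhoLDl -rhoRDl !S'j rhoL_S' rhoR_S'.
by rewrite rhoLDl rhoRDl regroup8 shiftD.
Qed.

Lemma rb_series_twist S : (forall n, linear (S n)) -> rb_series S -> rb_series (twist_def m x S).
Proof.
move=> SL DS u v; set S' := twist_def m x S.
have SD i : forall a b, S i (a + b) = S i a + S i b by exact: linD.
have S0 i : S i 0 = 0 by exact: lin0.
have S'E w l : S' l w + shift m (fun j => br x (S' j w)) l
             = S l w + shift m (fun j => S j (rhoL x w)) l by exact: twist_defE.
(* Compare both sides after applying the injective map [1 + t^m L_x]: it
   respects brackets ([conv_br_twist]) and turns [S'] into [S o psi]. *)
apply: (shift_inj (L := br x) m_gt0) => n.
have -> : conv (fun i j => S' i (vprod S' u v j)) n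
          + shift m (fun l => br x (conv (fun i j => S' i (vprod S' u v j)) l)) n
        = conv (fun i j => S i (vprod S' u v j
                                + shift m (fun l => rhoL x (vprod S' u v l)) j)) n.
  rewrite (eq_shift m n (fun l => lin_conv _ l (lin_br x))).
  rewrite -(conv_shiftl m (fun i j => br x (S' i (vprod S' u v j)))) -convD.
  rewrite (conv_shift_additive _ _ _ _ SD S0).
  rewrite -(conv_shiftl m (fun i j => S i (rhoL x (vprod S' u v j)))) -convD.
  by apply: eq_conv => i j; exact: S'E.
under [RHS]eq_conv do rewrite vprod_twist.
rewrite -(conv_br_twist (fun i => S' i u) (fun j => S' j v)) /=.
under eq_conv do rewrite !S'E.
rewrite (conv_shift_bilinear _ _ _ _ _ _ brDl brDr br0l br0r) DS.
rewrite (conv_shift_additive _ _ _ _ SD S0) -addrA; congr (_ + _).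
rewrite [RHS](eq_shift m n (fun l => conv_shift_additive m
  (fun j => vprod S (rhoL x u) v j + vprod S u (rhoL x v) j)
  (vprod S (rhoL x u) (rhoL x v)) l SD S0)) shiftD.
congr (_ + _); apply: eq_shift => l.
  by rewrite convD !DS -convD; apply: eq_conv => i j; rewrite [RHS]SD.
by apply: eq_shift => l'; exact: DS.
Qed.

End Twist.

Variable Tt : nat -> V -> g.
Hypothesis T_linear : linear T.
Hypothesis Z1_exact : forall f : V -> g, Z1 br rhoL rhoR T f <->
  exists2 x, Nij br rhoL rhoR T x & forall v, f v = dT0 br rhoL T x v.
Hypothesis Tt_deformation : formal_deformation br rhoL rhoR T Tt.

Let Tt_linear n : linear (Tt n). Proof. by case: Tt_deformation. Qed.

(* [gdef] is [Tt] transported along the formal automorphisms [gphi], [gpsi]. *)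
Record gauge := Gauge {
  gphi : nat -> g -> g;
  gpsi : nat -> V -> V;
  gdef : nat -> V -> g }.

Record gauged (k : nat) (G : gauge) : Prop := Gauged {
  gphi_linear : forall n, linear (gphi G n);
  gpsi_linear : forall n, linear (gpsi G n);
  gdef_linear : forall n, linear (gdef G n);
  gphi0 : forall y, gphi G 0%N y = y;
  gpsi0 : forall u, gpsi G 0%N u = u;
  gdef0 : forall u, gdef G 0%N u = T u;
  gphi_hom : hom_series (gphi G);
  gauge_compat_left : compat_left (gphi G) (gpsi G);
  gauge_compat_right : compat_right (gphi G) (gpsi G);
  gauge_intertwines : intertwines Tt (gpsi G) (gphi G) (gdef G);
  gdef_rb : rb_series (gdef G);
  gdef_low : forall i u, (0 < i <= k)%N -> gdef G i u = 0 }.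

Lemma gdef_cocycle k G : gauged k G -> Z1 br rhoL rhoR T (fun v => - gdef G k.+1 v).
Proof.
move=> GG; split=> [a u v|u v]; first by rewrite (gdef_linear GG) opprD scalerN.
have := gdef_rb GG u v k.+1.
have vanish i w : (0 < i < k.+1)%N -> gdef G i w = 0.
  by move=> /andP[i0 ik]; apply: (gdef_low GG); rewrite i0 -ltnS.
rewrite !(@conv_ends _ _ k.+1) ?subn0 ?subnn //; last 2 first.
- by move=> i /vanish ->.
- by move=> i /vanish ->; rewrite br0l.
rewrite /vprod !(gdef0 GG) /dT1 brNr brNl rhoLNl rhoRNl -opprD => ->.
by rewrite -(opprD (rhoL _ _)) (linN T_linear) !opprK -addrA addNr.
Qed.

Definition nij_primitive (f : V -> g) (x : g) : Prop :=
  Nij br rhoL rhoR T x /\ forall v, dT0 br rhoL T x v = - f v.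

Definition nij_choice (f : V -> g) : g := epsilon (inhabits 0) (nij_primitive f).

Lemma nij_choiceP k G : gauged k G -> nij_primitive (gdef G k.+1) (nij_choice (gdef G k.+1)).
Proof.
move=> GG; apply: epsilon_spec.
have [x Nx dx] := (Z1_exact _).1 (gdef_cocycle GG).
by exists x; split => // v; rewrite -dx.
Qed.

Definition gauge_step k G : gauge :=
  let x := nij_choice (gdef G k.+1) in
  Gauge (twist_g k.+1 x (gphi G)) (twist_V k.+1 x (gpsi G)) (twist_def k.+1 x (gdef G)).

Fixpoint gauge_seq k : gauge :=
  if k is k'.+1 then gauge_step k' (gauge_seq k')
  else Gauge (@id_series g) (@id_series V) Tt.

Lemma gauged_seq0 : gauged 0 (gauge_seq 0).
Proof.
have [_ [Tt0 Tt_rb]] := Tt_deformation.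
split=> //=; try exact: linear_id_series.
- by move=> u; rewrite Tt0.
- move=> n y z; rewrite conv_deg0l; last by move=> [|i] j //= _; rewrite br0l.
  by case: n => //= n; rewrite br0r.
- move=> n y u; rewrite conv_deg0l; last by move=> [|i] j //= _; rewrite rhoL0l.
  by case: n => //= n; rewrite rhoL0r.
- move=> n y u; rewrite conv_deg0l; last by move=> [|i] j //= _; rewrite rhoR0l.
  by case: n => //= n; rewrite rhoR0r.
- move=> n u; rewrite conv_deg0r; last by move=> i [|j] //= _; exact: lin0.
  by rewrite conv_deg0l // => [[|i]].
- by move=> u v n; exact: Tt_rb.
- by move=> i u; lia.
Qed.

Lemma gauged_step k G : gauged k G -> gauged k.+1 (gauge_step k G).
Proof.
move=> GG; have [Nx dx] := nij_choiceP GG.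
rewrite /gauge_step; set x := nij_choice _.
have m_gt0 : (0 < k.+1)%N by [].
split=> /=.
- by move=> n; apply: linear_twist_g; exact: gphi_linear GG.
- by move=> n; apply: linear_twist_V; exact: gpsi_linear GG.
- exact: linear_twist_def (gdef_linear GG).
- by move=> y; rewrite /twist_g /shift /= addr0 (gphi0 GG).
- by move=> u; rewrite /twist_V /shift /= addr0 (gpsi0 GG).
- by move=> u; rewrite twist_def_lt // (gdef0 GG).
- exact: (hom_twist _ Nx (gphi_linear GG) (gphi_hom GG)).
- exact: (compat_left_twist _ Nx (gpsi_linear GG) (gauge_compat_left GG)).
- exact: (compat_right_twist _ Nx (gpsi_linear GG) (gauge_compat_right GG)).
- exact: (intertwines_twist x m_gt0 Tt_linear (gphi_linear GG) (gauge_intertwines GG)).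
- exact: (rb_series_twist m_gt0 Nx (gdef_linear GG) (gdef_rb GG)).
move=> i u /andP[i_gt0]; rewrite leq_eqVlt => /orP[/eqP-> | ik].
  by rewrite twist_def_m ?dx ?subrr //; exact: gdef0 GG.
by rewrite twist_def_lt // (gdef_low GG) // i_gt0 -ltnS.
Qed.

Lemma gauged_seq k : gauged k (gauge_seq k).
Proof. by elim: k => [|k IH]; [exact: gauged_seq0 | exact: gauged_step]. Qed.

Lemma gphi_seq_stable i n : (i <= n)%N -> gphi (gauge_seq n) i = gphi (gauge_seq i) i.
Proof.
move=> /subnKC <-; elim: (n - i)%N => [|d IH]; first by rewrite addn0.
apply: functional_extensionality => y.
by rewrite addnS /= /twist_g /shift ltnNge leq_addr /= addr0 IH.
Qed.

Lemma gpsi_seq_stable i n : (i <= n)%N -> gpsi (gauge_seq n) i = gpsi (gauge_seq i) i.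
Proof.
move=> /subnKC <-; elim: (n - i)%N => [|d IH]; first by rewrite addn0.
apply: functional_extensionality => u.
by rewrite addnS /= /twist_V /shift ltnNge leq_addr /= addr0 IH.
Qed.

Definition phi_lim n := gphi (gauge_seq n) n.
Definition psi_lim n := gpsi (gauge_seq n) n.

Lemma hom_series_lim : hom_series phi_lim.
Proof.
move=> n y z; rewrite /phi_lim -(gphi_hom (gauged_seq n)).
by apply: eq_conv_le => i j le_in le_jn; rewrite (gphi_seq_stable le_in) (gphi_seq_stable le_jn).
Qed.

Lemma compat_left_lim : compat_left phi_lim psi_lim.
Proof.
move=> n y u; rewrite /phi_lim /psi_lim (gauge_compat_left (gauged_seq n)).
by apply: eq_conv_le => i j le_in le_jn; rewrite (gphi_seq_stable le_in) (gpsi_seq_stable le_jn).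
Qed.

Lemma compat_right_lim : compat_right phi_lim psi_lim.
Proof.
move=> n y u; rewrite /phi_lim /psi_lim (gauge_compat_right (gauged_seq n)).
by apply: eq_conv_le => i j le_in le_jn; rewrite (gphi_seq_stable le_in) (gpsi_seq_stable le_jn).
Qed.

Lemma intertwines_lim : intertwines Tt psi_lim phi_lim (const_deformation T).
Proof.
move=> n u; have Gn := gauged_seq n.
transitivity (conv (fun i j => Tt i (gpsi (gauge_seq n) j u)) n).
  by apply: eq_conv_le => i j _ le_jn; rewrite /psi_lim (gpsi_seq_stable le_jn).
rewrite (gauge_intertwines Gn); apply: eq_conv_le => i j le_in le_jn.
rewrite /phi_lim (gphi_seq_stable le_in); congr (_ _ _).
by case: j le_jn => [|j] le_jn /=; [exact: (gdef0 Gn u) | apply: (gdef_low Gn)].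
Qed.

Lemma deformation_trivial : trivial_deformation br rhoL rhoR T Tt.
Proof.
exists (nij_choice (Tt 1%N)), phi_lim, psi_lim.
repeat split.
- by move=> n; exact: (gphi_linear (gauged_seq n) n).
- by move=> n; exact: (gpsi_linear (gauged_seq n) n).
- by apply: functional_extensionality => y; rewrite /phi_lim /= /twist_g /shift add0r.
- by apply: functional_extensionality => u; rewrite /psi_lim /= /twist_V /shift add0r.
- exact: hom_series_lim.
- exact: compat_left_lim.
- exact: compat_right_lim.
- exact: intertwines_lim.
Qed.

End Rigidity.

Theorem proposition3p20 (K : fieldType) (g V : lmodType K)
  (br : g -> g -> g) (rhoL rhoR : g -> V -> V) (T : V -> g) :
  leibniz_algebra br ->
  leibniz_rep br rhoL rhoR ->
  relative_RB br rhoL rhoR T ->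
  (forall f : V -> g,
     Z1 br rhoL rhoR T f <->
     exists2 x, Nij br rhoL rhoR T x & forall v, f v = dT0 br rhoL T x v) ->
  rigid br rhoL rhoR T.
Proof.
move=> HL HR [T_linear _] Z1_exact Tt Tt_deformation.
exact: deformation_trivial.
Qed.
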